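(* Let $\nu_0=0$, $\gamma=0$ and $u>0$, and let $y(t;y_0)$ solve $\dot y=-sy(1-y)+u(1-y)$, $y(0)=y_0\in[0,1]$. Then $$g_r(y_0)=y_0\exp\Big(-s\int_0^r(1-y(\xi;y_0))\,d\xi\Big),\qquad y_0\in[0,1],$$ and in particular $$g_r(y_0)=\begin{cases}y_0\,\dfrac{u-s\,y(r;y_0)}{u-sy_0}, & y_0\in[0,1)\setminus\{u/s\},\\[6pt] y_0\,e^{-rs(1-y_0)}, & y_0\in\{u/s,1\}.\end{cases}$$ Furthermore $g_\infty(y_0)=\lim_{r\to\infty}g_r(y_0)$ exists and satisfies: (i) if $s=0$, then $g_\infty(y_0)=y_0$ for all $y_0\in[0,1]$; (ii) if $u\le s$, then $g_\infty(y_0)=0$ for $y_0\in[0,1)$ and $g_\infty(1)=1$; (iii) if $u>s$, then $g_\infty(y_0)=y_0\frac{u-s}{u-sy_0}$.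
   Context: Embedded ASG process $(a_r)_{r\ge0}$ (with $\gamma=0$, $\nu_0=0$): a random finite rooted tree started from a single unmarked root. Independently at each leaf $\ell$: at rate $s$, two children (left, right) are attached to $\ell$; at rate $u$, one child is attached and $\ell$ is marked $\times$. Typing: given types $c_\ell\in\{0,1\}$ at the leaves, types propagate to the root. A $\times$-marked vertex has type 1, and an outdegree-2 vertex has type 1 iff both children have type 1. Ancestral leaf $\lambda_v$: a leaf is its own ancestral leaf. For an outdegree-2 vertex, $\lambda_v$ is $\lambda$ of the right child if the right child has type 0, and $\lambda$ of the left child otherwise. For an outdegree-1 vertex, $\lambda_v$ is $\lambda$ of its child. $g_r(y_0)$ is the probability that the ancestral leaf of the root of $a_r$ has type 1, when the leaves are typed independently, each with type 1 with probability $y_0$. *)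

From Stdlib Require Import Reals List Arith.
From Coquelicot Require Import Coquelicot.
Import ListNotations.
Open Scope R_scope.

(* Finite rooted plane trees produced by the embedded ASG (gamma = 0, nu_0 = 0):
   - Leaf       : a leaf
   - Mark t     : a x-marked vertex of outdegree 1 with child t
   - Bin l r    : an (unmarked) vertex of outdegree 2, left child l, right child r *)
Inductive tree : Type :=
| Leaf : tree
| Mark : tree -> tree
| Bin : tree -> tree -> tree.

Fixpoint nleaves (t : tree) : nat :=
  match t with
  | Leaf => 1%nat
  | Mark t' => nleaves t'
  | Bin l r => (nleaves l + nleaves r)%nat
  end.

Fixpoint tsize (t : tree) : nat :=
  match t with
  | Leaf => 0%nat
  | Mark t' => S (tsize t')
  | Bin l r => S (tsize l + tsize r)
  end.

(* All one-step predecessors of T together with the transition rate: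
   one entry per vertex of T of the form [Mark Leaf] (rate u, collapsed to a leaf)
   or [Bin Leaf Leaf] (rate s, collapsed to a leaf). *)
Fixpoint preds (s u : R) (T : tree) : list (tree * R) :=
  match T with
  | Leaf => []
  | Mark t =>
      (match t with Leaf => [(Leaf, u)] | _ => [] end)
      ++ map (fun p => (Mark (fst p), snd p)) (preds s u t)
  | Bin l r =>
      (match l, r with Leaf, Leaf => [(Leaf, s)] | _, _ => [] end)
      ++ map (fun p => (Bin (fst p) r, snd p)) (preds s u l)
      ++ map (fun p => (Bin l (fst p), snd p)) (preds s u r)
  end.

(* Law of a_t (started from a single leaf): the unique solution of the Kolmogorov
   forward equations  d/dt p_t(T) = sum_{T' -> T} rate p_t(T') - (s+u) #leaves(T) p_t(T),
   written in Duhamel (integral) form and computed by recursion on the number of events. *)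
Fixpoint lawn (s u : R) (n : nat) (t : R) (T : tree) : R :=
  match n with
  | O => match T with Leaf => exp (- (s + u) * t) | _ => 0 end
  | S n' =>
      RInt (fun tau =>
              exp (- (s + u) * INR (nleaves T) * (t - tau)) *
              fold_right Rplus 0
                (map (fun p => snd p * lawn s u n' tau (fst p)) (preds s u T)))
           0 t
  end.

Definition law (s u t : R) (T : tree) : R := lawn s u (tsize T) t T.

Fixpoint trees_h (d : nat) : list tree :=
  match d with
  | O => [Leaf]
  | S d' => Leaf :: map Mark (trees_h d')
                 ++ flat_map (fun l => map (Bin l) (trees_h d')) (trees_h d')
  end.

Definition trees_of_size (n : nat) : list tree :=
  filter (fun T => Nat.eqb (tsize T) n) (trees_h n).

(* all boolean lists of length n (leaf types, listed left to right) *)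
Fixpoint bool_lists (n : nat) : list (list bool) :=
  match n with
  | O => [[]]
  | S n' => flat_map (fun cs => [true :: cs; false :: cs]) (bool_lists n')
  end.

(* Given leaf types cs (left to right), returns (type of the vertex,
   type of its ancestral leaf). *)
Fixpoint eval (T : tree) (cs : list bool) : bool * bool :=
  match T with
  | Leaf => let c := hd false cs in (c, c)
  | Mark t => (true, snd (eval t cs))
  | Bin l r =>
      let a := eval l (firstn (nleaves l) cs) in
      let b := eval r (skipn (nleaves l) cs) in
      (andb (fst a) (fst b), if fst b then snd a else snd b)
  end.

Definition weight (y0 : R) (cs : list bool) : R :=
  fold_right Rmult 1 (map (fun c : bool => if c then y0 else 1 - y0) cs).

(* probability that the ancestral leaf of the root of T has type 1, leaves
   i.i.d. of type 1 with probability y0 *)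
Definition ptype (y0 : R) (T : tree) : R :=
  fold_right Rplus 0
    (map (fun cs => weight y0 cs * (if snd (eval T cs) then 1 else 0))
         (bool_lists (nleaves T))).

(* g_r(y0) = sum over finite trees T of P(a_r = T) * ptype y0 T *)
Definition g (s u r y0 : R) : R :=
  Series (fun n => fold_right Rplus 0
            (map (fun T => law s u r T * ptype y0 T) (trees_of_size n))).

(* The law of [a_t] solves the forward Kolmogorov equation; dually, a function [phi t T] with
   [d/dt phi + gen phi = 0] has [t |-> E[phi t (a_t)]] constant.  Writing [y * anc1 y T] for
   the probability that the ancestral leaf of [T] has type 1 when leaves are i.i.d. of type 1
   with probability [y], the generator acts on [anc1 y] through its derivative in [y], with
   factor [(1 - y) (u - s y)], which is the right-hand side of the equation for [y].  Hence
   [exp (- s int_0^{r-t} (1 - y)) * anc1 (y (r - t)) T] is such a function, and comparing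
   [t = 0] with [t = r] gives the first formula.  Since [g] sums over trees with finitely many
   events, the argument is run on means truncated at [N] events; the escaping mass is
   controlled by Markov's inequality, the mean number of events being at most
   [(s + u) e^{sr} r].  The closed forms follow from [u - s y = (u - s y0) exp (-s int (1 - y))],
   and the limits from the explicit solution, for which
   [exp (-s int_0^r (1 - y)) = 1 / (1 + s (1 - y0) int_0^r e^{-(u - s) tau} dtau)]. *)

From Stdlib Require Import Reals List Permutation Lia Lra.
From Coquelicot Require Import Coquelicot.
Import ListNotations.
Open Scope R_scope.

Definition lsum {A} (f : A -> R) (l : list A) : R := fold_right Rplus 0 (map f l).

Section ListSums.
Context {A : Type}.
Implicit Types (f g : A -> R) (l : list A).

Lemma lsum_app f l1 l2 : lsum f (l1 ++ l2) = lsum f l1 + lsum f l2.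
Proof. induction l1 as [|x l1 IH]; unfold lsum in *; cbn; [ring|]. rewrite IH; ring. Qed.

Lemma lsum_map {B} f (h : B -> A) (l : list B) : lsum f (map h l) = lsum (fun x => f (h x)) l.
Proof. unfold lsum; now rewrite map_map. Qed.

Lemma lsum_flat_map {B} f (h : B -> list A) (l : list B) :
  lsum f (flat_map h l) = lsum (fun x => lsum f (h x)) l.
Proof. induction l as [|x l IH]; [reflexivity|]. cbn [flat_map]. now rewrite lsum_app, IH. Qed.

Lemma lsum_ext_in f g l : (forall x, In x l -> f x = g x) -> lsum f l = lsum g l.
Proof. intros H; unfold lsum; f_equal; now apply map_ext_in. Qed.

Lemma lsum_ext f g l : (forall x, f x = g x) -> lsum f l = lsum g l.
Proof. intros H; apply lsum_ext_in; auto. Qed.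

Lemma lsum_plus f g l : lsum (fun x => f x + g x) l = lsum f l + lsum g l.
Proof. induction l as [|x l IH]; unfold lsum in *; cbn; [ring|]. rewrite IH; ring. Qed.

Lemma lsum_minus f g l : lsum (fun x => f x - g x) l = lsum f l - lsum g l.
Proof. induction l as [|x l IH]; unfold lsum in *; cbn; [ring|]. rewrite IH; ring. Qed.

Lemma lsum_scal_l c f l : lsum (fun x => c * f x) l = c * lsum f l.
Proof. induction l as [|x l IH]; unfold lsum in *; cbn; [ring|]. rewrite IH; ring. Qed.

Lemma lsum_scal_r c f l : lsum (fun x => f x * c) l = lsum f l * c.
Proof. induction l as [|x l IH]; unfold lsum in *; cbn; [ring|]. rewrite IH; ring. Qed.

Lemma lsum_const0 l : lsum (fun _ => 0) l = 0.
Proof. induction l as [|x l IH]; unfold lsum in *; cbn; [ring|]. rewrite IH; ring. Qed.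

Lemma lsum_le f g l : (forall x, In x l -> f x <= g x) -> lsum f l <= lsum g l.
Proof.
  induction l as [|x l IH]; intros H; unfold lsum in *; cbn; [lra|].
  apply Rplus_le_compat; [apply H; now left | apply IH; intros; apply H; now right].
Qed.

Lemma lsum_nonneg f l : (forall x, In x l -> 0 <= f x) -> 0 <= lsum f l.
Proof. intros H; rewrite <- (lsum_const0 l); now apply lsum_le. Qed.

Lemma lsum_perm f l1 l2 : Permutation l1 l2 -> lsum f l1 = lsum f l2.
Proof. induction 1; unfold lsum in *; cbn in *; lra. Qed.

End ListSums.

Lemma sum_f_R0_telescope (X A B : nat -> R) N : A O = 0 -> (forall m, A (S m) = B m) ->
  sum_f_R0 (fun n => X n + A n - B n) N = sum_f_R0 X N - B N.
Proof. intros H0 HS. induction N as [|N IH]; cbn; [rewrite H0; ring | rewrite IH, HS; ring]. Qed.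

(* Coquelicot states its derivative rules with the [zero]/[plus]/[mult] of its algebraic
   hierarchy, which [apply] does not unify with [0]/[Rplus]/[Rmult]; these are the forms on [R]. *)
Lemma is_derive_ext_eq (f g : R -> R) (x l l' : R) :
  (forall t, f t = g t) -> l = l' -> is_derive f x l -> is_derive g x l'.
Proof. intros Hfg <-. now apply is_derive_ext. Qed.

Lemma is_derive_Rconst (c x : R) : is_derive (fun _ => c) x 0.
Proof. exact (is_derive_const c x). Qed.

Lemma is_derive_Rplus (f g : R -> R) (x df dg : R) : is_derive f x df -> is_derive g x dg ->
  is_derive (fun t => f t + g t) x (df + dg).
Proof. intros Hf Hg. apply is_derive_Reals, derivable_pt_lim_plus; now apply is_derive_Reals. Qed.

Lemma is_derive_Rminus (f g : R -> R) (x df dg : R) : is_derive f x df -> is_derive g x dg ->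
  is_derive (fun t => f t - g t) x (df - dg).
Proof. intros Hf Hg. apply is_derive_Reals, derivable_pt_lim_minus; now apply is_derive_Reals. Qed.

Lemma is_derive_Rmult (f g : R -> R) (x df dg : R) : is_derive f x df -> is_derive g x dg ->
  is_derive (fun t => f t * g t) x (df * g x + f x * dg).
Proof. intros Hf Hg. apply is_derive_Reals, derivable_pt_lim_mult; now apply is_derive_Reals. Qed.

Lemma is_derive_Rcomp (f g : R -> R) (x df dg : R) : is_derive g x dg -> is_derive f (g x) df ->
  is_derive (fun t => f (g t)) x (df * dg).
Proof.
  intros Hg Hf. apply is_derive_Reals, (derivable_pt_lim_comp g f); now apply is_derive_Reals.
Qed.

Lemma is_derive_Rexp (f : R -> R) (x df : R) : is_derive f x df ->
  is_derive (fun t => exp (f t)) x (exp (f x) * df).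
Proof. intros Hf. apply (is_derive_Rcomp exp f); [exact Hf | apply is_derive_exp]. Qed.

Lemma is_derive_lsum {X} (F F' : X -> R -> R) l (t : R) :
  (forall x, In x l -> is_derive (F x) t (F' x t)) ->
  is_derive (fun t => lsum (fun x => F x t) l) t (lsum (fun x => F' x t) l).
Proof.
  induction l as [|a l IH]; intros H.
  - exact (is_derive_Rconst 0 t).
  - apply is_derive_Rplus; [apply H; now left | apply IH; intros; apply H; now right].
Qed.

Lemma is_derive_sum_f_R0 (F F' : nat -> R -> R) N (t : R) :
  (forall n, (n <= N)%nat -> is_derive (F n) t (F' n t)) ->
  is_derive (fun t => sum_f_R0 (fun n => F n t) N) t (sum_f_R0 (fun n => F' n t) N).
Proof.
  induction N as [|N IH]; intros H; cbn; [now apply H|].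
  apply is_derive_Rplus; [apply IH; intros; apply H | apply H]; lia.
Qed.

Lemma is_derive_continuous (f : R -> R) (t d : R) : is_derive f t d -> continuous f t.
Proof. intros H. apply (ex_derive_continuous (V := R_NormedModule)). now exists d. Qed.

Lemma is_derive_RInt_0 (a : R -> R) (tau : R) : (forall x, continuous a x) ->
  is_derive (fun tau => RInt a 0 tau) tau (a tau).
Proof.
  intros Hc. apply (is_derive_RInt (V := R_CompleteNormedModule) a _ 0 tau); [|apply Hc].
  apply filter_forall; intros b.
  apply RInt_correct, (ex_RInt_continuous (V := R_CompleteNormedModule)).
  intros; apply Hc.
Qed.

Lemma exp_le_exp x y : x <= y -> exp x <= exp y.
Proof. intros [H|H]; [left; now apply exp_increasing | now rewrite H; right]. Qed.

Lemma derive_nonpos_le (f df : R -> R) a b : a <= b ->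
  (forall t, a <= t <= b -> is_derive f t (df t)) -> (forall t, a <= t <= b -> df t <= 0) ->
  f b <= f a.
Proof.
  intros Hab Hd Hneg.
  destruct (MVT_gen f a b df) as [c [Hc Heq]]; rewrite ?Rmin_left, ?Rmax_right in * by lra.
  - intros x Hx. apply Hd; lra.
  - intros x Hx. apply continuity_pt_filterlim, (is_derive_continuous f x (df x)), Hd; lra.
  - assert (df c * (b - a) <= 0) by (apply Rmult_le_0_r; [apply Hneg | ]; lra). lra.
Qed.

Lemma derive_zero_const (f : R -> R) r : (forall t, 0 <= t <= r -> is_derive f t 0) ->
  forall t, 0 <= t <= r -> f t = f 0.
Proof.
  intros Hd t Ht. apply Rle_antisym.
  - apply (derive_nonpos_le f (fun _ => 0) 0 t); [lra | intros; apply Hd; lra | intros; lra].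
  - enough (- f t <= - f 0) by lra.
    apply (derive_nonpos_le (fun t => - f t) (fun _ => - 0) 0 t); [lra | | intros; lra].
    intros x Hx. apply (is_derive_ext_eq (fun t => 0 - f t) _ x (0 - 0)); [intros; ring | ring |].
    apply is_derive_Rminus; [apply (is_derive_Rconst 0 x) | apply Hd; lra].
Qed.

Lemma continuous_Rmult_l (d : R) (g : R -> R) (x : R) :
  continuous g x -> continuous (fun t => d * g t) x.
Proof.
  intros H. apply continuity_pt_filterlim, continuity_pt_scal. now apply continuity_pt_filterlim.
Qed.

Lemma continuous_Rminus_l (c : R) (g : R -> R) (x : R) :
  continuous g x -> continuous (fun t => c - g t) x.
Proof.
  intros H. apply continuity_pt_filterlim, (continuity_pt_minus (fun _ => c)).
  - apply continuity_pt_const; intros ? ?; reflexivity.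
  - now apply continuity_pt_filterlim.
Qed.

(** * The tree process *)

(* Jumps out of [T] with their rates: the converse relation of [preds]. *)
Fixpoint succs (s u : R) (T : tree) : list (tree * R) :=
  match T with
  | Leaf => [(Bin Leaf Leaf, s); (Mark Leaf, u)]
  | Mark t => map (fun p => (Mark (fst p), snd p)) (succs s u t)
  | Bin l r => map (fun p => (Bin (fst p) r, snd p)) (succs s u l)
              ++ map (fun p => (Bin l (fst p), snd p)) (succs s u r)
  end.

Section Transitions.
Variables s u : R.

Lemma preds_tsize T p : In p (preds s u T) -> tsize T = S (tsize (fst p)).
Proof.
  revert p; induction T as [|t IH|l IHl r IHr]; intros p H; cbn in H.
  - destruct H.
  - apply in_app_or in H as [H|H].
    + destruct t; cbn in H; try tauto. now destruct H as [<-|[]].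
    + apply in_map_iff in H as [q [<- Hq]]. cbn. now rewrite (IH q Hq).
  - apply in_app_or in H as [H|H].
    + destruct l, r; cbn in H; try tauto. now destruct H as [<-|[]].
    + apply in_app_or in H as [H|H]; apply in_map_iff in H as [q [<- Hq]]; cbn.
      * rewrite (IHl q Hq); cbn; lia.
      * rewrite (IHr q Hq); cbn; lia.
Qed.

Lemma succs_tsize T p : In p (succs s u T) -> tsize (fst p) = S (tsize T).
Proof.
  revert p; induction T as [|t IH|l IHl r IHr]; intros p H; cbn in H.
  - now destruct H as [<-|[<-|[]]].
  - apply in_map_iff in H as [q [<- Hq]]. cbn. now rewrite (IH q Hq).
  - apply in_app_or in H as [H|H]; apply in_map_iff in H as [q [<- Hq]]; cbn.
    + rewrite (IHl q Hq); cbn; lia.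
    + rewrite (IHr q Hq); cbn; lia.
Qed.

Lemma In_preds_succs T T' rho : In (T', rho) (preds s u T) -> In (T, rho) (succs s u T').
Proof.
  revert T' rho; induction T as [|t IH|l IHl r IHr]; intros T' rho H; cbn in H.
  - destruct H.
  - apply in_app_or in H as [H|H].
    + destruct t; cbn in H; try tauto. destruct H as [H|[]]; inversion H; subst; cbn; auto.
    + apply in_map_iff in H as [[x rx] [Hq Hx]]; inversion Hq; subst.
      cbn. apply in_map_iff. exists (t, rho); auto.
  - apply in_app_or in H as [H|H].
    + destruct l, r; cbn in H; try tauto. destruct H as [H|[]]; inversion H; subst; cbn; auto.
    + apply in_app_or in H as [H|H]; apply in_map_iff in H as [[x rx] [Hq Hx]];
        inversion Hq; subst; cbn; apply in_or_app.
      * left. apply in_map_iff. exists (l, rho); auto.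
      * right. apply in_map_iff. exists (r, rho); auto.
Qed.

Lemma In_succs_preds T T' rho : In (T, rho) (succs s u T') -> In (T', rho) (preds s u T).
Proof.
  revert T rho; induction T' as [|t IH|l IHl r IHr]; intros T rho H; cbn in H.
  - destruct H as [H|[H|[]]]; inversion H; subst; cbn; auto.
  - apply in_map_iff in H as [[x rx] [Hq Hx]]; inversion Hq; subst.
    cbn. apply in_or_app; right. apply in_map_iff. exists (t, rho); auto.
  - apply in_app_or in H as [H|H]; apply in_map_iff in H as [[x rx] [Hq Hx]];
      inversion Hq; subst; cbn; apply in_or_app; right; apply in_or_app.
    + left. apply in_map_iff. exists (l, rho); auto.
    + right. apply in_map_iff. exists (r, rho); auto.
Qed.

Lemma In_preds_rate T p : In p (preds s u T) -> snd p = s \/ snd p = u.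
Proof.
  revert p; induction T as [|t IH|l IHl r IHr]; intros p H; cbn in H.
  - destruct H.
  - apply in_app_or in H as [H|H].
    + destruct t; cbn in H; try tauto. destruct H as [<-|[]]; auto.
    + apply in_map_iff in H as [q [<- Hq]]. exact (IH q Hq).
  - apply in_app_or in H as [H|H].
    + destruct l, r; cbn in H; try tauto. destruct H as [<-|[]]; auto.
    + apply in_app_or in H as [H|H]; apply in_map_iff in H as [q [<- Hq]];
        [exact (IHl q Hq) | exact (IHr q Hq)].
Qed.

Lemma In_succs_rate T p : In p (succs s u T) -> snd p = s \/ snd p = u.
Proof.
  intros H. destruct p as [T' rho]. apply In_succs_preds in H. exact (In_preds_rate _ _ H).
Qed.

Lemma NoDup_map_tree_ctx (C : tree -> tree) (l : list (tree * R)) :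
  (forall x y, C x = C y -> x = y) -> NoDup l -> NoDup (map (fun p => (C (fst p), snd p)) l).
Proof.
  intros HC. apply NoDup_map_NoDup_ForallPairs.
  intros [a b] [c d] _ _ H; cbn in H. injection H as H ->. now rewrite (HC _ _ H).
Qed.

Lemma NoDup_preds T : NoDup (preds s u T).
Proof.
  induction T as [|t IH|l IHl r IHr]; cbn.
  - constructor.
  - apply NoDup_app.
    + destruct t; repeat constructor; auto.
    + apply NoDup_map_tree_ctx; [congruence | exact IH].
    + intros a Ha Hb. destruct t; cbn in *; tauto.
  - apply NoDup_app; [destruct l, r; repeat constructor; auto| |].
    + apply NoDup_app.
      * apply (NoDup_map_tree_ctx (fun x => Bin x r)); [congruence | exact IHl].
      * apply (NoDup_map_tree_ctx (Bin l)); [congruence | exact IHr].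
      *
intros a Ha Hb. apply in_map_iff in Ha as [x [<- Hxl]]; apply in_map_iff in Hb as [y [Hy _]].
        injection Hy as Hl _ _. apply preds_tsize in Hxl. rewrite <- Hl in Hxl. lia.
    + intros a Ha Hb. destruct l, r; cbn in *; tauto.
Qed.

Lemma NoDup_succs T : NoDup (succs s u T).
Proof.
  induction T as [|t IH|l IHl r IHr]; cbn.
  - constructor; [intros [H|[]]; discriminate | repeat constructor; auto].
  - apply NoDup_map_tree_ctx; [congruence | exact IH].
  - apply NoDup_app.
    + apply (NoDup_map_tree_ctx (fun x => Bin x r)); [congruence | exact IHl].
    + apply (NoDup_map_tree_ctx (Bin l)); [congruence | exact IHr].
    + intros a Ha Hb. apply in_map_iff in Ha as [x [<- Hxl]]; apply in_map_iff in Hb as [y [Hy _]].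
    injection Hy as Hl _ _. apply succs_tsize in Hxl. rewrite <- Hl in Hxl. lia.
Qed.

End Transitions.

Lemma NoDup_flat_map {A B} (h : A -> list B) l : NoDup l -> (forall x, In x l -> NoDup (h x)) ->
  (forall x y b, In x l -> In y l -> In b (h x) -> In b (h y) -> x = y) -> NoDup (flat_map h l).
Proof.
  induction l as [|a l IH]; intros Hn Hh Hd; cbn; [constructor|].
  inversion Hn as [|? ? Ha Hl]; subst. apply NoDup_app.
  - apply Hh; now left.
  - apply IH; auto.
    + intros; apply Hh; now right.
    + intros x y b Hx Hy; apply Hd; now right.
  - intros b Hb Hb'. apply in_flat_map in Hb' as [y [Hy Hby]].
    assert (a = y) as -> by (apply (Hd a y b); auto; now (left + right)). tauto.
Qed.

Lemma NoDup_trees_h d : NoDup (trees_h d).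
Proof.
  induction d as [|d IH]; cbn; [repeat constructor; auto|].
  constructor.
  - intros H. apply in_app_or in H as [H|H].
    + apply in_map_iff in H as [x [Hx _]]; discriminate.
    + apply in_flat_map in H as [x [_ H]]; apply in_map_iff in H as [y [Hy _]]; discriminate.
  - apply NoDup_app.
    + apply NoDup_map_NoDup_ForallPairs; auto. intros x y _ _ H; now injection H.
    + apply NoDup_flat_map; auto.
      * intros x _. apply NoDup_map_NoDup_ForallPairs; auto. intros a b _ _ H; now injection H.
      * intros x y b _ _ H1 H2.
        apply in_map_iff in H1 as [a [<- _]]; apply in_map_iff in H2 as [c [Hc _]].
        now injection Hc.
    + intros a H1 H2. apply in_map_iff in H1 as [x [<- _]].
      apply in_flat_map in H2 as [y [_ H]]; apply in_map_iff in H as [z [Hz _]]; discriminate.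
Qed.

Lemma In_trees_h T d : (tsize T <= d)%nat -> In T (trees_h d).
Proof.
  revert d; induction T as [|t IH|l IHl r IHr]; intros d Hd.
  - destruct d; cbn; auto.
  - destruct d; cbn in Hd; [lia|]. cbn. right. apply in_or_app; left. apply in_map, IH; lia.
  - destruct d; cbn in Hd; [lia|]. cbn. right. apply in_or_app; right. apply in_flat_map.
    exists l; split; [apply IHl; lia|]. apply in_map, IHr; lia.
Qed.

Lemma In_trees_of_size T n : In T (trees_of_size n) <-> tsize T = n.
Proof.
  unfold trees_of_size. rewrite filter_In, Nat.eqb_eq.
  split; [tauto|]. intros H; split; [apply In_trees_h; lia | exact H].
Qed.

Lemma NoDup_trees_of_size n : NoDup (trees_of_size n).
Proof. apply NoDup_filter, NoDup_trees_h. Qed.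

(* Both sides sum [F] over the same set of transitions [T' -> T], with [tsize T = n + 1]. *)
Lemma lsum_preds_succs s u n (F : tree -> R -> tree -> R) :
  lsum (fun T => lsum (fun p => F (fst p) (snd p) T) (preds s u T)) (trees_of_size (S n)) =
  lsum (fun T' => lsum (fun q => F T' (snd q) (fst q)) (succs s u T')) (trees_of_size n).
Proof.
  set (X1 := flat_map (fun T => map (fun p => (p, T)) (preds s u T)) (trees_of_size (S n))).
  set (X2 := flat_map (fun T' => map (fun q => ((T', snd q), fst q)) (succs s u T'))
                      (trees_of_size n)).
  set (G := fun x : (tree * R) * tree => F (fst (fst x)) (snd (fst x)) (snd x)).
  transitivity (lsum G X1).
  { unfold X1. rewrite lsum_flat_map. apply lsum_ext; intros T. now rewrite lsum_map. }
  transitivity (lsum G X2).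
  2: { unfold X2. rewrite lsum_flat_map. apply lsum_ext; intros T. now rewrite lsum_map. }
  apply lsum_perm, NoDup_Permutation.
  - apply NoDup_flat_map; [apply NoDup_trees_of_size| |].
    + intros T _. apply NoDup_map_NoDup_ForallPairs; [|apply NoDup_preds].
      intros a b _ _ H; now injection H.
    + intros x y b _ _ H1 H2.
      apply in_map_iff in H1 as [a [<- _]]; apply in_map_iff in H2 as [c [Hc _]].
      now injection Hc.
  - apply NoDup_flat_map; [apply NoDup_trees_of_size| |].
    + intros T _. apply NoDup_map_NoDup_ForallPairs; [|apply NoDup_succs].
      intros [a b] [c d] _ _ H; now injection H as -> ->.
    + intros x y b _ _ H1 H2.
      apply in_map_iff in H1 as [a [<- _]]; apply in_map_iff in H2 as [c [Hc _]].
      now injection Hc.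
  - intros [[T' rho] T]. unfold X1, X2. rewrite !in_flat_map. split.
    + intros [T0 [HT0 H]]. apply in_map_iff in H as [p [Hp Hpin]]. injection Hp as -> ->.
      apply In_trees_of_size in HT0. pose proof (preds_tsize _ _ _ _ Hpin) as Hs; cbn in Hs.
      exists T'. split; [apply In_trees_of_size; lia|].
      apply in_map_iff. exists (T, rho); split; [reflexivity | now apply In_preds_succs].
    + intros [T0 [HT0 H]]. apply in_map_iff in H as [[a b] [Hp Hpin]].
      cbn in Hp. injection Hp as -> -> ->.
      apply In_trees_of_size in HT0. pose proof (succs_tsize _ _ _ _ Hpin) as Hs; cbn in Hs.
      exists T. split; [apply In_trees_of_size; lia|].
      apply in_map_iff. exists (T', rho); split; [reflexivity | now apply In_succs_preds].
Qed.

(** * Types of the root and of the ancestral leaf *)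

Definition b2R (b : bool) : R := if b then 1 else 0.

(* [root1 y T] is the probability that the root of [T] has type 1 and [y * anc1 y T] the
   probability that its ancestral leaf has, leaves being of type 1 with probability [y]. *)
Fixpoint root1 (y : R) (T : tree) : R :=
  match T with Leaf => y | Mark _ => 1 | Bin l r => root1 y l * root1 y r end.
Fixpoint anc1 (y : R) (T : tree) : R :=
  match T with Leaf => 1 | Mark t => anc1 y t | Bin l r => anc1 y l * root1 y r end.

Fixpoint root1' (y : R) (T : tree) : R :=
  match T with
  | Leaf => 1 | Mark _ => 0 | Bin l r => root1' y l * root1 y r + root1 y l * root1' y r
  end.
Fixpoint anc1' (y : R) (T : tree) : R :=
  match T with
  | Leaf => 0 | Mark t => anc1' y t | Bin l r => anc1' y l * root1 y r + anc1 y l * root1' y r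
  end.

Lemma lsum_bool_lists_S (F : list bool -> R) n :
  lsum F (bool_lists (S n)) = lsum (fun cs => F (true :: cs) + F (false :: cs)) (bool_lists n).
Proof.
  cbn [bool_lists]. rewrite lsum_flat_map. apply lsum_ext; intros cs. unfold lsum; cbn; ring.
Qed.

Lemma lsum_weight y n : lsum (weight y) (bool_lists n) = 1.
Proof.
  induction n as [|n IH]; [unfold lsum, weight; cbn; ring|].
  rewrite lsum_bool_lists_S, <- IH. apply lsum_ext; intros cs. unfold weight; cbn; ring.
Qed.

Lemma lsum_weight_split y m n (f h : list bool -> R) :
  lsum (fun cs => weight y cs * (f (firstn m cs) * h (skipn m cs))) (bool_lists (m + n)) =
  lsum (fun cs => weight y cs * f cs) (bool_lists m)
  * lsum (fun cs => weight y cs * h cs) (bool_lists n).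
Proof.
  revert f; induction m as [|m IH]; intros f.
  - cbn [firstn skipn Nat.add].
    transitivity (f [] * lsum (fun cs => weight y cs * h cs) (bool_lists n)).
    { rewrite <- lsum_scal_l. apply lsum_ext; intros; ring. }
    f_equal. unfold lsum, weight; cbn; ring.
  - cbn [Nat.add]. rewrite !lsum_bool_lists_S.
    transitivity
      (y * lsum (fun cs => weight y cs * (f (true :: firstn m cs) * h (skipn m cs)))
                (bool_lists (m + n))
       + (1 - y) * lsum (fun cs => weight y cs * (f (false :: firstn m cs) * h (skipn m cs)))
                        (bool_lists (m + n))).
    { rewrite <- !lsum_scal_l, <- lsum_plus. apply lsum_ext; intros cs. unfold weight; cbn; ring. }
    rewrite (IH (fun c => f (true :: c))), (IH (fun c => f (false :: c))).
    set (H := lsum (fun cs => weight y cs * h cs) (bool_lists n)).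
    transitivity ((y * lsum (fun cs => weight y cs * f (true :: cs)) (bool_lists m)
      + (1 - y) * lsum (fun cs => weight y cs * f (false :: cs)) (bool_lists m)) * H); [ring|].
    f_equal. rewrite <- !lsum_scal_l, <- lsum_plus.
    apply lsum_ext; intros cs. unfold weight; cbn; ring.
Qed.

Lemma eval_anc_root T cs : snd (eval T cs) = true -> fst (eval T cs) = true.
Proof.
  revert cs; induction T as [|t IH|l IHl r IHr]; intros cs; cbn; auto.
  destruct (fst (eval r (skipn (nleaves l) cs))) eqn:E.
  - intros H. now rewrite (IHl _ H).
  - intros H. apply IHr in H. congruence.
Qed.

Lemma lsum_eval_types y T :
  lsum (fun cs => weight y cs * b2R (fst (eval T cs))) (bool_lists (nleaves T)) = root1 y T /\
  lsum (fun cs => weight y cs * b2R (snd (eval T cs))) (bool_lists (nleaves T)) = y * anc1 y T.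
Proof.
  induction T as [|t IH|l [IHl1 IHl2] r [IHr1 IHr2]].
  - unfold lsum, weight, b2R; cbn. split; ring.
  - cbn. split; [|exact (proj2 IH)].
    etransitivity; [|apply (lsum_weight y (nleaves t))]. apply lsum_ext; intros; unfold b2R; ring.
  - cbn [nleaves root1 anc1]. split.
    + rewrite <- IHl1, <- IHr1, <- lsum_weight_split. apply lsum_ext; intros cs.
      cbn. unfold b2R. destruct (fst (eval l _)), (fst (eval r _)); cbn; ring.
    + rewrite <- Rmult_assoc, <- IHl2, <- IHr1, <- lsum_weight_split. apply lsum_ext; intros cs.
      cbn. unfold b2R. pose proof (eval_anc_root r (skipn (nleaves l) cs)) as Hr.
      destruct (snd (eval l _)), (fst (eval r _)), (snd (eval r _)); cbn; try ring;
        specialize (Hr eq_refl); discriminate.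
Qed.

Lemma ptype_anc1 y T : ptype y T = y * anc1 y T.
Proof. exact (proj2 (lsum_eval_types y T)). Qed.

Lemma root1_bounds y T : 0 <= y <= 1 -> 0 <= root1 y T <= 1.
Proof.
  intros Hy; induction T as [|t _|l IHl r IHr]; cbn; [lra | lra | nra].
Qed.

Lemma anc1_bounds y T : 0 <= y <= 1 -> 0 <= anc1 y T <= 1.
Proof.
  intros Hy; induction T as [|t IH|l IHl r _]; cbn; [lra | exact IH |].
  pose proof (root1_bounds y r Hy). nra.
Qed.

Lemma is_derive_root1 T y : is_derive (fun h => root1 h T) y (root1' y T).
Proof.
  induction T as [|t _|l IHl r IHr]; cbn.
  - exact (is_derive_id y).
  - exact (is_derive_Rconst 1 y).
  - now apply is_derive_Rmult.
Qed.

Lemma is_derive_anc1 T y : is_derive (fun h => anc1 h T) y (anc1' y T).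
Proof.
  induction T as [|t IH|l IHl r _]; cbn.
  - exact (is_derive_Rconst 1 y).
  - exact IH.
  - apply is_derive_Rmult; [exact IHl | apply is_derive_root1].
Qed.

Definition leavesR (T : tree) : R := INR (nleaves T).

Lemma leavesR_nonneg T : 0 <= leavesR T.
Proof. apply pos_INR. Qed.

Section Generator.
Variables s u : R.

Definition out (f : tree -> R) (T : tree) : R := lsum (fun q => snd q * f (fst q)) (succs s u T).

Definition gen (f : tree -> R) (T : tree) : R := out f T - (s + u) * leavesR T * f T.

Lemma out_Mark f t : out f (Mark t) = out (fun T => f (Mark T)) t.
Proof. unfold out; cbn [succs]. now rewrite lsum_map. Qed.

Lemma out_Bin f l r :
  out f (Bin l r) = out (fun T => f (Bin T r)) l + out (fun T => f (Bin l T)) r.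
Proof. unfold out; cbn [succs]. now rewrite lsum_app, !lsum_map. Qed.

Lemma out_ext_in f h T :
  (forall q, In q (succs s u T) -> f (fst q) = h (fst q)) -> out f T = out h T.
Proof. intros H. apply lsum_ext_in; intros q Hq. now rewrite H. Qed.

Lemma out_scal c f T : out (fun T' => c * f T') T = c * out f T.
Proof. unfold out. rewrite <- lsum_scal_l. apply lsum_ext; intros; ring. Qed.

Lemma out_one T : out (fun _ => 1) T = (s + u) * leavesR T.
Proof.
  induction T as [|t IH|l IHl r IHr].
  - unfold out, lsum, leavesR; cbn; ring.
  - now rewrite out_Mark.
  - rewrite out_Bin, IHl, IHr. unfold leavesR; cbn; rewrite plus_INR; ring.
Qed.

Lemma out_plus f h T : out (fun T' => f T' + h T') T = out f T + out h T.
Proof. unfold out. rewrite <- lsum_plus. apply lsum_ext; intros; ring. Qed.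

Lemma out_leaves T : out leavesR T = (s + u) * leavesR T * leavesR T + s * leavesR T.
Proof.
  induction T as [|t IH|l IHl r IHr].
  - unfold out, lsum, leavesR; cbn; ring.
  - now rewrite out_Mark.
  - rewrite out_Bin.
    rewrite (out_ext_in _ (fun T => leavesR T + leavesR r * 1))
      by (intros; unfold leavesR; cbn; rewrite plus_INR; ring).
    rewrite (out_ext_in (fun T => leavesR (Bin l T)) (fun T => leavesR T + leavesR l * 1))
      by (intros; unfold leavesR; cbn; rewrite plus_INR; ring).
    rewrite !out_plus, !out_scal, IHl, IHr, !out_one.
    unfold leavesR; cbn; rewrite plus_INR; ring.
Qed.

Lemma out_tsize T : out (fun T' => INR (tsize T')) T = (s + u) * leavesR T * (INR (tsize T) + 1).
Proof.
  rewrite (out_ext_in _ (fun _ => (INR (tsize T) + 1) * 1)), out_scal, out_one; [ring|].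
  intros q Hq. now rewrite (succs_tsize _ _ _ _ Hq), S_INR, Rmult_1_r.
Qed.

Lemma out_root1 y T :
  out (root1 y) T = (s + u) * leavesR T * root1 y T + (1 - y) * (u - s * y) * root1' y T.
Proof.
  induction T as [|t _|l IHl r IHr].
  - unfold out, lsum, leavesR; cbn; ring.
  - rewrite out_Mark, out_one. unfold leavesR; cbn; ring.
  - rewrite out_Bin. cbn [root1 root1'].
    rewrite (out_ext_in _ (fun T => root1 y r * root1 y T)) by (intros; cbn; ring).
    rewrite out_scal, out_scal, IHl, IHr. unfold leavesR; cbn; rewrite plus_INR; ring.
Qed.

Lemma out_anc1 y T :
  out (anc1 y) T =
  (s + u) * leavesR T * anc1 y T - s * (1 - y) * anc1 y T + (1 - y) * (u - s * y) * anc1' y T.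
Proof.
  induction T as [|t IH|l IHl r _].
  - unfold out, lsum, leavesR; cbn; ring.
  - now rewrite out_Mark.
  - rewrite out_Bin. cbn [anc1 anc1'].
    rewrite (out_ext_in _ (fun T => root1 y r * anc1 y T)) by (intros; cbn; ring).
    rewrite out_scal, out_scal, IHl, out_root1. unfold leavesR; cbn; rewrite plus_INR; ring.
Qed.

Section NonnegRates.
Hypotheses (Hs : 0 <= s) (Hu : 0 <= u).

Lemma out_nonneg f T : (forall T', 0 <= f T') -> 0 <= out f T.
Proof.
  intros H. apply lsum_nonneg; intros q Hq. apply Rmult_le_pos; [|apply H].
  now destruct (In_succs_rate _ _ _ _ Hq) as [-> | ->].
Qed.

Lemma out_le f h T : (forall T', f T' <= h T') -> out f T <= out h T.
Proof.
  intros H. apply lsum_le; intros q Hq. apply Rmult_le_compat_l; [|apply H].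
  now destruct (In_succs_rate _ _ _ _ Hq) as [-> | ->].
Qed.

End NonnegRates.
End Generator.

Section Law.
Variables s u : R.

Definition inflow (n : nat) (t : R) (T : tree) : R :=
  lsum (fun p => snd p * lawn s u n t (fst p)) (preds s u T).

Definition lawn' (n : nat) (t : R) (T : tree) : R :=
  match n with O => 0 | S m => inflow m t T end - (s + u) * leavesR T * lawn s u n t T.

Lemma is_derive_inflow n T t :
  (forall T', is_derive (fun t => lawn s u n t T') t (lawn' n t T')) ->
  is_derive (fun t => inflow n t T) t (lsum (fun p => snd p * lawn' n t (fst p)) (preds s u T)).
Proof.
  intros H. unfold inflow.
  apply (is_derive_lsum (fun p t => snd p * lawn s u n t (fst p))
                        (fun p t => snd p * lawn' n t (fst p))).
  intros p _. apply is_derive_scal, H.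
Qed.

Lemma continuous_exp_inflow n T q :
  (forall x, continuous (fun t => inflow n t T) x) ->
  forall x, continuous (fun tau => exp (q * tau) * inflow n tau T) x.
Proof.
  intros Hc x. apply (continuous_mult (fun tau => exp (q * tau))); [|apply Hc].
  apply (is_derive_continuous _ _ (exp (q * x) * q)). auto_derive; auto; ring.
Qed.

(* Pulling [exp (- q t)] out of the integral leaves an integrand independent of [t]. *)
Lemma lawn_S n t T (q := (s + u) * leavesR T) :
  (forall x, continuous (fun t => inflow n t T) x) ->
  lawn s u (S n) t T = exp (- q * t) * RInt (fun tau => exp (q * tau) * inflow n tau T) 0 t.
Proof.
  intros Hc. cbn [lawn].
  transitivity (scal (exp (- q * t)) (RInt (fun tau => exp (q * tau) * inflow n tau T) 0 t));
    [|reflexivity].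
  rewrite <- RInt_scal.
  - apply RInt_ext; intros x _. unfold scal; cbn; unfold mult; cbn. unfold inflow, lsum.
    replace (- (s + u) * INR (nleaves T) * (t - x)) with (- q * t + q * x)
      by (unfold q, leavesR; ring).
    rewrite exp_plus; ring.
  - apply (ex_RInt_continuous (V := R_CompleteNormedModule)); intros x _.
    now apply continuous_exp_inflow.
Qed.

Lemma is_derive_lawn n : forall T t, is_derive (fun t => lawn s u n t T) t (lawn' n t T).
Proof.
  induction n as [|n IH]; intros T t.
  - unfold lawn'. destruct T; cbn [lawn].
    + auto_derive; auto. unfold leavesR; cbn; ring.
    + apply (is_derive_ext_eq (fun _ => 0) _ t 0); [reflexivity | ring | apply is_derive_Rconst].
    + apply (is_derive_ext_eq (fun _ => 0) _ t 0); [reflexivity | ring | apply is_derive_Rconst].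
  - set (q := (s + u) * leavesR T).
    assert (Hc : forall x, continuous (fun t => inflow n t T) x).
    { intros x. eapply is_derive_continuous, is_derive_inflow. intros; apply IH. }
    eapply (is_derive_ext_eq
      (fun t => exp (- q * t) * RInt (fun tau => exp (q * tau) * inflow n tau T) 0 t)).
    { intros t'. symmetry. now apply lawn_S. }
    2: { apply is_derive_Rmult; [auto_derive; auto|].
         apply is_derive_RInt_0. now apply continuous_exp_inflow. }
    unfold lawn'. rewrite (lawn_S n t T Hc). fold q.
    replace (exp (- q * t) * (exp (q * t) * inflow n t T))
      with (exp (- q * t + q * t) * inflow n t T)
      by (rewrite exp_plus; ring).
    replace (- q * t + q * t) with 0 by ring. rewrite exp_0. ring.
Qed.

Lemma continuous_inflow n T x : continuous (fun t => inflow n t T) x.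
Proof. eapply is_derive_continuous, is_derive_inflow. intros; apply is_derive_lawn. Qed.

Lemma lawn_nonneg (Hs : 0 <= s) (Hu : 0 <= u) n : forall T t, 0 <= t -> 0 <= lawn s u n t T.
Proof.
  induction n as [|n IH]; intros T t Ht.
  - destruct T; cbn; [left; apply exp_pos | lra | lra].
  - rewrite lawn_S by apply continuous_inflow. apply Rmult_le_pos; [left; apply exp_pos|].
    apply RInt_ge_0; [exact Ht| |].
    + apply (ex_RInt_continuous (V := R_CompleteNormedModule)); intros x _.
      apply continuous_exp_inflow, continuous_inflow.
    + intros x Hx. apply Rmult_le_pos; [left; apply exp_pos|].
      apply lsum_nonneg; intros p Hp. apply Rmult_le_pos.
      * now destruct (In_preds_rate _ _ _ _ Hp) as [-> | ->].
      * apply IH; lra.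
Qed.

Definition law' (t : R) (T : tree) : R :=
  lsum (fun p => snd p * law s u t (fst p)) (preds s u T) - (s + u) * leavesR T * law s u t T.

Lemma is_derive_law T t : is_derive (fun t => law s u t T) t (law' t T).
Proof.
  unfold law', law. eapply is_derive_ext_eq; [reflexivity | | apply is_derive_lawn].
  destruct (tsize T) as [|n] eqn:E; unfold lawn'.
  - destruct T; cbn in E; try discriminate. reflexivity.
  - f_equal. apply lsum_ext_in; intros p Hp. pose proof (preds_tsize _ _ _ _ Hp) as Hs.
    rewrite E in Hs. injection Hs as <-. reflexivity.
Qed.

Lemma law_nonneg (Hs : 0 <= s) (Hu : 0 <= u) t T : 0 <= t -> 0 <= law s u t T.
Proof. now apply lawn_nonneg. Qed.

Lemma law_0 T : law s u 0 T = match T with Leaf => 1 | _ => 0 end.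
Proof.
  unfold law. destruct (tsize T) eqn:E; cbn [lawn].
  - destruct T; cbn in E; try discriminate. rewrite Rmult_0_r. apply exp_0.
  - rewrite RInt_point. destruct T; cbn in E; try discriminate; reflexivity.
Qed.

End Law.

(** * Truncated means *)

Section Dynkin.
Variables s u : R.
Notation law := (law s u).

Definition level (n : nat) (F : tree -> R) : R := lsum F (trees_of_size n).

(* [E[phi t (a_t); tsize a_t <= N]] *)
Definition trunc_mean (phi : R -> tree -> R) (N : nat) (t : R) : R :=
  sum_f_R0 (fun n => level n (fun T => law t T * phi t T)) N.

(* Dynkin's formula for the truncated mean: the flux out of level [N] is the boundary term. *)
Lemma is_derive_trunc_mean (phi phi' : R -> tree -> R) N t :
  (forall T, is_derive (fun t => phi t T) t (phi' t T)) ->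
  is_derive (trunc_mean phi N) t
    (sum_f_R0 (fun n => level n (fun T => law t T * (phi' t T + gen s u (phi t) T))) N
     - level N (fun T => law t T * out s u (phi t) T)).
Proof.
  intros Hphi.
  eapply is_derive_ext_eq; [reflexivity| |].
  2: { apply (is_derive_sum_f_R0 (fun n t => level n (fun T => law t T * phi t T))
         (fun n t => level n (fun T => law' s u t T * phi t T + law t T * phi' t T))).
       intros n _. apply (is_derive_lsum (fun T t => law t T * phi t T)
         (fun T t => law' s u t T * phi t T + law t T * phi' t T)).
       intros T _. apply is_derive_Rmult; [apply is_derive_law | apply Hphi]. }
  set (inflowT := fun T => lsum (fun p => snd p * law t (fst p)) (preds s u T)).
  rewrite <- (sum_f_R0_telescope _ (fun n => level n (fun T => inflowT T * phi t T))
                (fun n => level n (fun T => law t T * out s u (phi t) T))).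
  - apply sum_eq; intros n _. unfold level, gen.
    rewrite <- lsum_plus, <- lsum_minus. apply lsum_ext; intros T. unfold inflowT, law'; ring.
  - unfold level, inflowT, lsum; cbn; ring.
  - intros m. unfold level, inflowT.
    transitivity (lsum (fun T => lsum (fun p => snd p * law t (fst p) * phi t T) (preds s u T))
                    (trees_of_size (S m))).
    { apply lsum_ext; intros T. now rewrite <- lsum_scal_r. }
    rewrite (lsum_preds_succs s u m (fun a b c => b * law t a * phi t c)).
    apply lsum_ext; intros T. unfold out. rewrite <- lsum_scal_l. apply lsum_ext; intros; ring.
Qed.

Lemma trunc_mean_scal (c : R -> R) phi N t :
  trunc_mean (fun t T => c t * phi t T) N t = c t * trunc_mean phi N t.
Proof.
  unfold trunc_mean. rewrite scal_sum. apply sum_eq; intros n _. unfold level.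
  rewrite <- lsum_scal_r. apply lsum_ext; intros; ring.
Qed.

Lemma trunc_mean_0 phi N : trunc_mean phi N 0 = phi 0 Leaf.
Proof.
  unfold trunc_mean. induction N as [|N IH]; cbn [sum_f_R0].
  - unfold level. change (trees_of_size 0) with [Leaf]. unfold lsum; cbn [map fold_right].
    rewrite law_0. ring.
  - rewrite IH. unfold level. rewrite (lsum_ext_in _ (fun _ => 0)), lsum_const0; [ring|].
    intros T HT. apply In_trees_of_size in HT. rewrite law_0.
    destruct T; cbn in HT; [discriminate | ring | ring].
Qed.

Section NonnegRates.
Hypotheses (Hs : 0 <= s) (Hu : 0 <= u).

Lemma level_law_nonneg n t F :
  0 <= t -> (forall T, 0 <= F T) -> 0 <= level n (fun T => law t T * F T).
Proof.
  intros Ht H. apply lsum_nonneg; intros T _. apply Rmult_le_pos; [now apply law_nonneg | apply H].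
Qed.

Lemma is_derive_trunc_mean_harmonic (phi phi' : R -> tree -> R) N t :
  (forall T, is_derive (fun t => phi t T) t (phi' t T)) ->
  (forall T, phi' t T + gen s u (phi t) T = 0) ->
  is_derive (trunc_mean phi N) t (- level N (fun T => law t T * out s u (phi t) T)).
Proof.
  intros Hd Hh. eapply is_derive_ext_eq; [reflexivity | | now apply is_derive_trunc_mean].
  rewrite sum_eq_R0; [ring|]. intros n _. unfold level.
  rewrite (lsum_ext _ (fun _ => 0)), lsum_const0; [reflexivity|]. intros T. rewrite Hh; ring.
Qed.

Lemma trunc_mean_harmonic_le (phi phi' : R -> tree -> R) N r : 0 <= r ->
  (forall t, 0 <= t <= r -> forall T, is_derive (fun t => phi t T) t (phi' t T)) ->
  (forall t, 0 <= t <= r -> forall T, phi' t T + gen s u (phi t) T = 0) ->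
  (forall t, 0 <= t <= r -> forall T, 0 <= phi t T) ->
  trunc_mean phi N r <= phi 0 Leaf.
Proof.
  intros Hr Hd Hh Hpos. rewrite <- (trunc_mean_0 phi N).
  apply (derive_nonpos_le _ (fun t => - level N (fun T => law t T * out s u (phi t) T)) 0 r Hr).
  - intros t Ht. apply (is_derive_trunc_mean_harmonic phi phi'); auto.
  - intros t Ht. enough (0 <= level N (fun T => law t T * out s u (phi t) T)) by lra.
    apply level_law_nonneg; [lra|]. intros T. now apply out_nonneg, Hpos.
Qed.

Definition one_fn : R -> tree -> R := fun _ _ => 1.

Lemma is_derive_trunc_mass N t :
  is_derive (trunc_mean one_fn N) t (- level N (fun T => law t T * ((s + u) * leavesR T))).
Proof.
  eapply is_derive_ext_eq; [reflexivity | | apply (is_derive_trunc_mean_harmonic _ (fun _ _ => 0))].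
  - f_equal. unfold level. apply lsum_ext; intros T. unfold one_fn. now rewrite out_one.
  - intros T. exact (is_derive_Rconst 1 t).
  - intros T. unfold gen, one_fn. rewrite out_one; ring.
Qed.

Lemma trunc_mean_leaves_le N t : 0 <= t -> trunc_mean (fun _ => leavesR) N t <= exp (s * t).
Proof.
  intros Ht.
  assert (H : trunc_mean (fun t T => exp (- s * t) * leavesR T) N t
              <= exp (- s * 0) * leavesR Leaf).
  { apply (trunc_mean_harmonic_le (fun t T => exp (- s * t) * leavesR T)
             (fun t T => - s * exp (- s * t) * leavesR T)); [exact Ht | | |].
    - intros t' _ T. auto_derive; auto; ring.
    - intros t' _ T. unfold gen. rewrite out_scal, out_leaves. ring.
    - intros t' _ T. apply Rmult_le_pos; [left; apply exp_pos | apply leavesR_nonneg]. }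
  rewrite (trunc_mean_scal (fun t => exp (- s * t)) (fun _ => leavesR)) in H.
  unfold leavesR at 2 in H; cbn in H. rewrite Rmult_0_r, exp_0, Rmult_1_r in H.
  replace (trunc_mean _ N t)
    with (exp (s * t) * (exp (- s * t) * trunc_mean (fun _ => leavesR) N t)).
  - pose proof (exp_pos (s * t)). nra.
  - rewrite <- Rmult_assoc, <- exp_plus. replace (s * t + - s * t) with 0 by ring.
    rewrite exp_0; ring.
Qed.

Lemma is_derive_trunc_mean_tsize N t :
  is_derive (trunc_mean (fun _ T => INR (tsize T)) N) t
    ((s + u) * trunc_mean (fun _ => leavesR) N t
     - (INR N + 1) * level N (fun T => law t T * ((s + u) * leavesR T))).
Proof.
  eapply is_derive_ext_eq; [reflexivity | | apply (is_derive_trunc_mean _ (fun _ _ => 0))].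
  - f_equal.
    + unfold trunc_mean. rewrite scal_sum. apply sum_eq; intros n _. unfold level.
      rewrite <- lsum_scal_r. apply lsum_ext; intros T. unfold gen. rewrite out_tsize. ring.
    + unfold level. rewrite <- lsum_scal_l. apply lsum_ext_in; intros T HT.
      apply In_trees_of_size in HT. rewrite out_tsize, HT. ring.
  - intros T. apply is_derive_Rconst.
Qed.

(* Markov's inequality for the number of events, whose mean grows at most like [(s+u) e^{sr} r]. *)
Lemma trunc_mass_tail N r : 0 <= r ->
  (INR N + 1) * (1 - trunc_mean one_fn N r) <= (s + u) * exp (s * r) * r.
Proof.
  intros Hr.
  set (size_fn := fun (_ : R) T => INR (tsize T)).
  set (X := fun t => trunc_mean size_fn N t - (INR N + 1) * trunc_mean one_fn N t
                     - (s + u) * exp (s * r) * t).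
  assert (HX : X r <= X 0).
  { apply (derive_nonpos_le X (fun t => (s + u) * trunc_mean (fun _ => leavesR) N t
      - (s + u) * exp (s * r)) 0 r Hr).
    - intros t Ht. unfold X. eapply is_derive_ext_eq; [reflexivity | |].
      2: { apply is_derive_Rminus; [apply is_derive_Rminus|].
           - apply is_derive_trunc_mean_tsize.
           - apply is_derive_scal, is_derive_trunc_mass.
           - apply is_derive_scal, is_derive_id. }
      cbn. ring.
    - intros t Ht. pose proof (trunc_mean_leaves_le N t (proj1 Ht)).
      assert (exp (s * t) <= exp (s * r)) by (apply exp_le_exp, Rmult_le_compat_l; lra).
      assert (0 <= s + u) by lra. nra. }
  unfold X in HX. rewrite !trunc_mean_0 in HX.
  change (size_fn 0 Leaf) with 0 in HX. change (one_fn 0 Leaf) with 1 in HX.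
  assert (0 <= trunc_mean size_fn N r).
  { apply cond_pos_sum; intros n. apply level_law_nonneg; [exact Hr|]. intros; apply pos_INR. }
  lra.
Qed.

Lemma trunc_mean_harmonic_ge (phi phi' : R -> tree -> R) N r : 0 <= r ->
  (forall t, 0 <= t <= r -> forall T, is_derive (fun t => phi t T) t (phi' t T)) ->
  (forall t, 0 <= t <= r -> forall T, phi' t T + gen s u (phi t) T = 0) ->
  (forall t, 0 <= t <= r -> forall T, phi t T <= 1) ->
  phi 0 Leaf - (s + u) * exp (s * r) * r / (INR N + 1) <= trunc_mean phi N r.
Proof.
  intros Hr Hd Hh Hle.
  assert (Hdefect : trunc_mean one_fn N r - trunc_mean phi N r <= 1 - phi 0 Leaf).
  { enough (H : trunc_mean one_fn N r - trunc_mean phi N r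
                 <= trunc_mean one_fn N 0 - trunc_mean phi N 0) by now rewrite !trunc_mean_0 in H.
    apply (derive_nonpos_le (fun t => trunc_mean one_fn N t - trunc_mean phi N t)
      (fun t => - level N (fun T => law t T * ((s + u) * leavesR T))
                - - level N (fun T => law t T * out s u (phi t) T)) 0 r Hr).
    - intros t Ht. apply is_derive_Rminus; [apply is_derive_trunc_mass|].
      apply (is_derive_trunc_mean_harmonic phi phi'); auto.
    - intros t Ht. enough (level N (fun T => law t T * out s u (phi t) T)
                           <= level N (fun T => law t T * ((s + u) * leavesR T))) by lra.
      apply lsum_le; intros T _. apply Rmult_le_compat_l; [apply law_nonneg; lra|].
      rewrite <- out_one. apply out_le; auto. }
  pose proof (trunc_mass_tail N r Hr).
  assert (HN : 0 < INR N + 1) by (pose proof (pos_INR N); lra).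
  enough (1 - trunc_mean one_fn N r <= (s + u) * exp (s * r) * r / (INR N + 1)) by lra.
  apply (Rmult_le_reg_l (INR N + 1)); [exact HN|]. field_simplify; lra.
Qed.

Lemma lim_seq_div_succ (C : R) : is_lim_seq (fun N => C / (INR N + 1)) 0.
Proof.
  assert (H : is_lim_seq (fun N => INR N + 1) p_infty).
  { apply (is_lim_seq_ext (fun n => INR (S n))); [intros; apply S_INR|].
    apply (is_lim_seq_incr_1 INR p_infty), is_lim_seq_INR. }
  apply is_lim_seq_inv in H; [|discriminate]. apply (is_lim_seq_scal_l _ C) in H. cbn in H.
  rewrite Rmult_0_r in H. exact H.
Qed.

Lemma trunc_mean_harmonic_cvg (phi phi' : R -> tree -> R) r : 0 <= r ->
  (forall t, 0 <= t <= r -> forall T, is_derive (fun t => phi t T) t (phi' t T)) ->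
  (forall t, 0 <= t <= r -> forall T, phi' t T + gen s u (phi t) T = 0) ->
  (forall t, 0 <= t <= r -> forall T, 0 <= phi t T <= 1) ->
  is_lim_seq (fun N => trunc_mean phi N r) (phi 0 Leaf).
Proof.
  intros Hr Hd Hh Hb.
  apply (is_lim_seq_le_le (fun N => phi 0 Leaf - (s + u) * exp (s * r) * r / (INR N + 1)) _
           (fun _ => phi 0 Leaf)).
  - intros N. split.
    + apply (trunc_mean_harmonic_ge phi phi'); auto. intros; now apply Hb.
    + apply (trunc_mean_harmonic_le phi phi'); auto. intros; now apply Hb.
  - replace (Finite (phi 0 Leaf)) with (Finite (phi 0 Leaf - 0)) by (f_equal; ring).
    apply is_lim_seq_minus'; [apply is_lim_seq_const | apply lim_seq_div_succ].
  - apply is_lim_seq_const.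
Qed.

End NonnegRates.
End Dynkin.

(** * The equation for [y] *)

Lemma linear_ode_solution (f a : R -> R) r : (forall x, continuous a x) ->
  (forall t, 0 <= t <= r -> is_derive f t (- a t * f t)) ->
  forall t, 0 <= t <= r -> f t = f 0 * exp (- RInt a 0 t).
Proof.
  intros Hc Hd t Ht.
  assert (E : f t * exp (RInt a 0 t) = f 0 * exp (RInt a 0 0)).
  { apply (derive_zero_const (fun t => f t * exp (RInt a 0 t)) r); [|exact Ht].
    intros x Hx. eapply is_derive_ext_eq; [reflexivity | |].
    2: { apply is_derive_Rmult; [apply Hd, Hx|]. apply is_derive_Rexp, is_derive_RInt_0, Hc. }
    cbv beta; ring. }
  rewrite RInt_point in E. change (zero : R) with 0 in E. rewrite exp_0, Rmult_1_r in E.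
  rewrite <- E, Rmult_assoc, <- exp_plus, Rplus_opp_r, exp_0. ring.
Qed.

Section ODE.
Variables s u y0 : R.
Variable y : R -> R.
Hypotheses (Hu : 0 <= u) (Hy0 : 0 <= y0 <= 1) (Hyinit : y 0 = y0).
Hypothesis Hyderive : forall t, 0 <= t -> is_derive y t (- s * y t * (1 - y t) + u * (1 - y t)).

(* [y] is only controlled on [[0, +oo)]; its even extension is continuous everywhere, which is
   what integration and [is_derive_RInt] require. *)
Definition y_even (t : R) : R := y (Rabs t).

Lemma y_even_eq t : 0 <= t -> y_even t = y t.
Proof. intros Ht; unfold y_even; now rewrite Rabs_pos_eq. Qed.

Lemma continuous_y_even x : continuous y_even x.
Proof.
  apply (continuous_comp Rabs y); [apply continuous_Rabs|].
  eapply is_derive_continuous, Hyderive, Rabs_pos.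
Qed.

Lemma continuous_compl_y_even x : continuous (fun t => 1 - y_even t) x.
Proof. apply continuous_Rminus_l, continuous_y_even. Qed.

Definition decay_rate (t : R) : R := s * (1 - y_even t).

Lemma continuous_decay_rate x : continuous decay_rate x.
Proof. apply continuous_Rmult_l, continuous_compl_y_even. Qed.

Lemma one_minus_y_eq t : 0 <= t ->
  1 - y t = (1 - y0) * exp (- RInt (fun t => u - s * y_even t) 0 t).
Proof.
  intros Ht. rewrite <- Hyinit.
  apply (linear_ode_solution (fun t => 1 - y t) _ t); [| |lra].
  - intros x; apply continuous_Rminus_l, continuous_Rmult_l, continuous_y_even.
  - intros x Hx. eapply is_derive_ext_eq; [reflexivity | |].
    2: { apply is_derive_Rminus; [apply (is_derive_Rconst 1 x) | apply Hyderive; lra]. }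
    rewrite y_even_eq by lra. ring.
Qed.

Lemma y_le_1 t : 0 <= t -> y t <= 1.
Proof.
  intros Ht. pose proof (one_minus_y_eq t Ht).
  pose proof (exp_pos (- RInt (fun t => u - s * y_even t) 0 t)). nra.
Qed.

Lemma y_ge_0 t : 0 <= t -> 0 <= y t.
Proof.
  intros Ht.
  set (b := decay_rate).
  (* [(y * exp (RInt b 0 t))' = u (1 - y) * exp (RInt b 0 t) >= 0] *)
  assert (H : - (y t * exp (RInt b 0 t)) <= - (y 0 * exp (RInt b 0 0))).
  { apply (derive_nonpos_le (fun t => - (y t * exp (RInt b 0 t)))
             (fun x => - (u * (1 - y x) * exp (RInt b 0 x))) 0 t Ht).
    - intros x Hx.
      eapply (is_derive_ext_eq (fun t => 0 - y t * exp (RInt b 0 t))); [intros; ring | |].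
      2: { apply is_derive_Rminus; [apply (is_derive_Rconst 0 x)|].
           apply is_derive_Rmult; [apply Hyderive; lra|].
           apply is_derive_Rexp, is_derive_RInt_0, continuous_decay_rate. }
      unfold b, decay_rate. rewrite y_even_eq by lra. ring.
    - intros x Hx. pose proof (y_le_1 x (proj1 Hx)). pose proof (exp_pos (RInt b 0 x)).
      enough (0 <= u * (1 - y x) * exp (RInt b 0 x)) by lra.
      apply Rmult_le_pos; [apply Rmult_le_pos|]; lra. }
  rewrite RInt_point in H. change (zero : R) with 0 in H. rewrite exp_0, Rmult_1_r, Hyinit in H.
  pose proof (exp_pos (RInt b 0 t)). nra.
Qed.

Lemma y_bounds t : 0 <= t -> 0 <= y t <= 1.
Proof. split; [apply y_ge_0 | apply y_le_1]; auto. Qed.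

Definition int_compl (t : R) : R := RInt (fun xi => 1 - y_even xi) 0 t.

Lemma int_compl_eq t : 0 <= t -> int_compl t = RInt (fun xi => 1 - y xi) 0 t.
Proof.
  intros Ht. apply RInt_ext; intros x Hx. rewrite Rmin_left, Rmax_right in Hx by lra.
  rewrite y_even_eq by lra. reflexivity.
Qed.

Lemma int_compl_nonneg t : 0 <= t -> 0 <= int_compl t.
Proof.
  intros Ht. apply RInt_ge_0; [exact Ht | |].
  - apply (ex_RInt_continuous (V := R_CompleteNormedModule)); intros; apply continuous_compl_y_even.
  - intros x Hx. rewrite y_even_eq by lra. pose proof (y_le_1 x); lra.
Qed.

Lemma int_compl_0 : int_compl 0 = 0.
Proof. unfold int_compl. now rewrite RInt_point. Qed.

Lemma is_derive_int_compl t : is_derive int_compl t (1 - y_even t).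
Proof. apply (is_derive_RInt_0 (fun xi => 1 - y_even xi)), continuous_compl_y_even. Qed.

(* [u - s y] solves the linear equation [w' = - s (1 - y) w]. *)
Lemma u_minus_sy_eq t : 0 <= t -> u - s * y t = (u - s * y0) * exp (- s * int_compl t).
Proof.
  intros Ht.
  rewrite (linear_ode_solution (fun t => u - s * y t) decay_rate t continuous_decay_rate); [| |lra].
  - rewrite Hyinit. f_equal. f_equal.
    unfold int_compl. rewrite (RInt_ext _ (fun x => scal s (1 - y_even x))) by reflexivity.
    rewrite (RInt_scal (V := R_CompleteNormedModule)).
    + cbn; unfold mult; cbn; ring.
    + apply (ex_RInt_continuous (V := R_CompleteNormedModule)); intros.
      apply continuous_compl_y_even.
  - intros x Hx. eapply is_derive_ext_eq; [reflexivity | |].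
    2: { apply is_derive_Rminus; [apply is_derive_Rconst | apply is_derive_scal, Hyderive; lra]. }
    unfold decay_rate. rewrite y_even_eq by lra. ring.
Qed.

End ODE.

(** * Duality *)

Section Duality.
Variables s u y0 : R.
Variable y : R -> R.
Hypotheses (Hs : 0 <= s) (Hu : 0 <= u) (Hy0 : 0 <= y0 <= 1) (Hyinit : y 0 = y0).
Hypothesis Hyderive : forall t, 0 <= t -> is_derive y t (- s * y t * (1 - y t) + u * (1 - y t)).
Variable r : R.
Hypothesis Hr : 0 <= r.

(* [t |-> E[dual t (a_t)]] is constant: at [t = r] it is [E[anc1 y0 (a_r)] = g r y0 / y0], at
   [t = 0] it is [exp (- s * int_compl y r)]. *)
Definition dual (t : R) (T : tree) : R := exp (- s * int_compl y (r - t)) * anc1 (y (r - t)) T.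

Definition dual' (t : R) (T : tree) : R :=
  exp (- s * int_compl y (r - t)) *
  (s * (1 - y (r - t)) * anc1 (y (r - t)) T
   - anc1' (y (r - t)) T * ((1 - y (r - t)) * (u - s * y (r - t)))).

Lemma is_derive_dual t T : 0 <= t <= r -> is_derive (fun t => dual t T) t (dual' t T).
Proof.
  intros Ht.
  assert (Hrt : is_derive (fun t => r - t) t (-1)).
  { auto_derive; auto; ring. }
  eapply is_derive_ext_eq; [reflexivity | |].
  2: { apply is_derive_Rmult.
       - apply is_derive_Rexp, is_derive_scal.
         apply (is_derive_Rcomp (int_compl y) (fun t => r - t)); [exact Hrt|].
         apply (is_derive_int_compl s u y Hyderive).
       - apply (is_derive_Rcomp (fun h => anc1 h T) (fun t => y (r - t))); [|apply is_derive_anc1].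
         apply (is_derive_Rcomp y (fun t => r - t)); [exact Hrt | apply Hyderive; lra]. }
  unfold dual'. rewrite y_even_eq by lra. ring.
Qed.

Lemma dual_harmonic t T : 0 <= t <= r -> dual' t T + gen s u (dual t) T = 0.
Proof. intros Ht. unfold gen, dual, dual'. rewrite out_scal, out_anc1. ring. Qed.

Lemma dual_bounds t T : 0 <= t <= r -> 0 <= dual t T <= 1.
Proof.
  intros Ht. unfold dual.
  assert (HA : 0 <= int_compl y (r - t)) by (apply (int_compl_nonneg s u y0); auto; lra).
  assert (HE : exp (- s * int_compl y (r - t)) <= 1).
  { rewrite <- exp_0. apply exp_le_exp.
    enough (0 <= s * int_compl y (r - t)) by lra. now apply Rmult_le_pos. }
  pose proof (exp_pos (- s * int_compl y (r - t))).
  assert (Hy : 0 <= y (r - t) <= 1) by (apply (y_bounds s u y0 y Hu Hy0 Hyinit Hyderive); lra).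
  pose proof (anc1_bounds (y (r - t)) T Hy).
  split; [apply Rmult_le_pos; lra|]. rewrite <- (Rmult_1_r 1). apply Rmult_le_compat; lra.
Qed.

Lemma g_eq_exp_int_compl : g s u r y0 = y0 * exp (- s * int_compl y r).
Proof.
  assert (Hlim := trunc_mean_harmonic_cvg s u Hs Hu dual dual' r Hr
     (fun t Ht T => is_derive_dual t T Ht) (fun t Ht T => dual_harmonic t T Ht)
     (fun t Ht T => dual_bounds t T Ht)).
  replace (dual 0 Leaf) with (exp (- s * int_compl y r)) in Hlim
    by (unfold dual; cbn; rewrite Rminus_0_r; ring).
  apply is_series_unique.
  (* [is_series a l] is [is_lim_seq (sum_n a) l] up to conversion. *)
  match goal with |- is_series ?a _ =>
    enough (H : is_lim_seq (sum_n a) (y0 * exp (- s * int_compl y r))) by exact H end.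
  apply (is_lim_seq_ext (fun N => y0 * trunc_mean s u dual N r)).
  - intros N. rewrite sum_n_Reals. unfold trunc_mean. rewrite scal_sum.
    apply sum_eq; intros n _. unfold level. rewrite <- lsum_scal_r. apply lsum_ext; intros T.
    rewrite ptype_anc1. unfold dual.
    rewrite Rminus_diag, (int_compl_0 y), Hyinit, Rmult_0_r, exp_0. ring.
  - apply (is_lim_seq_scal_l _ y0) in Hlim. exact Hlim.
Qed.

End Duality.

Section ClosedForms.
Variables s u y0 : R.
Variable y : R -> R.
Hypotheses (Hs : 0 <= s) (Hu : 0 <= u) (Hy0 : 0 <= y0 <= 1) (Hyinit : y 0 = y0).
Hypothesis Hyderive : forall t, 0 <= t -> is_derive y t (- s * y t * (1 - y t) + u * (1 - y t)).

Lemma g_eq_exp_RInt r : 0 <= r -> g s u r y0 = y0 * exp (- s * RInt (fun xi => 1 - y xi) 0 r).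
Proof. intros Hr. rewrite <- int_compl_eq by exact Hr. now apply g_eq_exp_int_compl. Qed.

Lemma g_eq_ratio r : 0 <= r -> u - s * y0 <> 0 -> g s u r y0 = y0 * (u - s * y r) / (u - s * y0).
Proof.
  intros Hr Hne. rewrite (g_eq_exp_int_compl s u y0 y), (u_minus_sy_eq s u y0 y) by auto.
  field. exact Hne.
Qed.

Lemma y_stationary : 0 < u -> s * y0 = u \/ y0 = 1 -> forall t, 0 <= t -> y t = y0.
Proof.
  intros Hupos [Hsu | H1] t Ht.
  - pose proof (u_minus_sy_eq s u y0 y Hyinit Hyderive t Ht) as W.
    replace (u - s * y0) with 0 in W by lra. rewrite Rmult_0_l in W.
    assert (H : s <> 0) by (intros ->; lra).
    apply (Rmult_eq_reg_l s); [rewrite Hsu; lra | exact H].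
  - pose proof (one_minus_y_eq s u y0 y Hyinit Hyderive t Ht). rewrite H1 in *. lra.
Qed.

Lemma g_eq_stationary r : 0 < u -> 0 <= r -> (s * y0 = u \/ y0 = 1) ->
  g s u r y0 = y0 * exp (- r * s * (1 - y0)).
Proof.
  intros Hupos Hr Hst. rewrite g_eq_exp_RInt by exact Hr.
  rewrite (RInt_ext _ (fun _ => 1 - y0)).
  - rewrite RInt_const. cbn; unfold mult; cbn. do 2 f_equal. ring.
  - intros x Hx. rewrite Rmin_left, Rmax_right in Hx by lra.
    rewrite y_stationary by (auto; lra). reflexivity.
Qed.

End ClosedForms.

(** * The explicit solution and the limit of [g] *)

Section Solution.
Variables s u y0 : R.
Hypotheses (Hs : 0 <= s) (Hu : 0 <= u) (Hy0 : 0 <= y0 <= 1).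

Definition psi (t : R) : R := RInt (fun tau => exp (- (u - s) * tau)) 0 t.

Lemma is_derive_psi t : is_derive psi t (exp (- (u - s) * t)).
Proof.
  apply (is_derive_RInt_0 (fun tau => exp (- (u - s) * tau))). intros x.
  apply (is_derive_continuous _ _ (exp (- (u - s) * x) * (- (u - s)))). auto_derive; auto; ring.
Qed.

Lemma psi_0 : psi 0 = 0.
Proof. unfold psi. now rewrite RInt_point. Qed.

Lemma psi_nonneg t : 0 <= t -> 0 <= psi t.
Proof.
  intros Ht. rewrite <- psi_0. enough (- psi t <= - psi 0) by lra.
  apply (derive_nonpos_le (fun t => - psi t) (fun t => - exp (- (u - s) * t)) 0 t Ht).
  - intros x _.
    apply (is_derive_ext_eq (fun t => 0 - psi t) _ x (0 - exp (- (u - s) * x))); [intros; ring | ring |].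
    apply is_derive_Rminus; [apply is_derive_Rconst | apply is_derive_psi].
  - intros x _. pose proof (exp_pos (- (u - s) * x)). lra.
Qed.

Lemma psi_ge_id t : u <= s -> 0 <= t -> t <= psi t.
Proof.
  intros Hus Ht. enough (t - psi t <= 0 - psi 0) by (rewrite psi_0 in *; lra).
  apply (derive_nonpos_le (fun t => t - psi t) (fun t => 1 - exp (- (u - s) * t)) 0 t Ht).
  - intros x _. apply is_derive_Rminus; [exact (is_derive_id x) | apply is_derive_psi].
  - intros x Hx. rewrite <- exp_0 at 1. enough (exp 0 <= exp (- (u - s) * x)) by lra.
    apply exp_le_exp. nra.
Qed.

Lemma psi_closed_form t : 0 <= t -> (u - s) * psi t = 1 - exp (- (u - s) * t).
Proof.
  intros Ht.
  enough (E : (u - s) * psi t - 1 + exp (- (u - s) * t)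
              = (u - s) * psi 0 - 1 + exp (- (u - s) * 0)).
  { rewrite psi_0, !Rmult_0_r, exp_0 in E. lra. }
  apply (derive_zero_const (fun t => (u - s) * psi t - 1 + exp (- (u - s) * t)) t); [|lra].
  intros x _. eapply is_derive_ext_eq; [reflexivity | |].
  2: { apply is_derive_Rplus; [apply is_derive_Rminus|].
       - apply is_derive_scal, is_derive_psi.
       - apply is_derive_Rconst.
       - apply is_derive_Rexp, is_derive_scal, is_derive_id. }
  cbn. ring.
Qed.

Definition den (t : R) : R := 1 + s * (1 - y0) * psi t.

Lemma den_ge_1 t : 0 <= t -> 1 <= den t.
Proof.
  intros Ht. unfold den. pose proof (psi_nonneg t Ht).
  assert (0 <= s * (1 - y0)) by (apply Rmult_le_pos; lra).
  enough (0 <= s * (1 - y0) * psi t) by lra. now apply Rmult_le_pos.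
Qed.

Definition sol (t : R) : R := 1 - (1 - y0) * exp (- (u - s) * t) / den t.

Lemma sol_0 : sol 0 = y0.
Proof. unfold sol, den. rewrite psi_0, Rmult_0_r, exp_0. field. Qed.

Lemma is_derive_den t : is_derive den t (s * (1 - y0) * exp (- (u - s) * t)).
Proof.
  eapply (is_derive_ext_eq (fun t => 1 + s * (1 - y0) * psi t)); [reflexivity | |].
  2: { apply is_derive_Rplus; [apply is_derive_Rconst | apply is_derive_scal, is_derive_psi]. }
  ring.
Qed.

Lemma is_derive_sol t : 0 <= t -> is_derive sol t (- s * sol t * (1 - sol t) + u * (1 - sol t)).
Proof.
  intros Ht. pose proof (den_ge_1 t Ht) as HD.
  eapply is_derive_ext_eq; [reflexivity | |].
  2: { apply is_derive_Rminus; [apply is_derive_Rconst|].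
       apply is_derive_div; [| apply is_derive_den | lra].
       apply is_derive_scal, (is_derive_Rexp (fun t => - (u - s) * t)), is_derive_scal, is_derive_id. }
  unfold sol. cbn. field. lra.
Qed.

(* [den' = s (1 - sol) den], so [exp (- s * int_compl sol) * den] is constant. *)
Lemma exp_int_compl_sol r : 0 <= r -> exp (- s * int_compl sol r) = / den r.
Proof.
  intros Hr. pose proof (den_ge_1 r Hr).
  enough (E : exp (- s * int_compl sol r) * den r = exp (- s * int_compl sol 0) * den 0).
  { rewrite int_compl_0, Rmult_0_r, exp_0 in E. unfold den in E at 2. rewrite psi_0 in E.
    apply (Rmult_eq_reg_r (den r)); [|lra]. rewrite E, Rinv_l by lra. ring. }
  apply (derive_zero_const (fun t => exp (- s * int_compl sol t) * den t) r); [|lra].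
  intros x Hx. pose proof (den_ge_1 x (proj1 Hx)).
  eapply is_derive_ext_eq; [reflexivity | |].
  2: { apply is_derive_Rmult; [|apply is_derive_den].
       apply is_derive_Rexp, is_derive_scal, (is_derive_int_compl s u), is_derive_sol. }
  rewrite y_even_eq by lra. unfold sol. field. lra.
Qed.

Lemma g_eq_div_den r : 0 <= r -> g s u r y0 = y0 / den r.
Proof.
  intros Hr. rewrite (g_eq_exp_int_compl s u y0 sol Hs Hu Hy0 sol_0 is_derive_sol r Hr).
  now rewrite exp_int_compl_sol.
Qed.

End Solution.

Lemma is_lim_of_decay_bound (f : R -> R) (l C k : R) : 0 < k ->
  (forall r, 0 <= r -> Rabs (f r - l) <= C / (1 + k * r)) -> is_lim f p_infty l.
Proof.
  intros Hk H. apply is_lim_spec. intros eps. cbn.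
  pose proof (cond_pos eps) as He.
  exists (Rmax 0 (C / (k * eps))). intros x Hx.
  pose proof (Rmax_l 0 (C / (k * eps))). pose proof (Rmax_r 0 (C / (k * eps))).
  eapply Rle_lt_trans; [apply H; lra|].
  assert (HC : C < k * eps * x).
  { apply (Rmult_lt_reg_r (/ (k * eps))); [apply Rinv_0_lt_compat; nra|].
    field_simplify; [|lra ..]. unfold Rdiv in *; lra. }
  apply (Rmult_lt_reg_r (1 + k * x)); [nra|]. field_simplify; nra.
Qed.

Lemma exp_neg_le_inv x : 0 <= x -> exp (- x) <= / (1 + x).
Proof.
  intros Hx. rewrite exp_Ropp. pose proof (exp_ineq1_le x). apply Rinv_le_contravar; lra.
Qed.

Lemma g_lim_at_1 (s u : R) : 0 <= s -> 0 <= u -> is_lim (fun r => g s u r 1) p_infty 1.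
Proof.
  intros Hs Hu. apply (is_lim_of_decay_bound _ 1 0 1); [lra|]. intros r Hr.
  rewrite g_eq_div_den by (auto; lra).
  replace (1 / den s u 1 r - 1) with 0 by (unfold den; field). rewrite Rabs_R0. unfold Rdiv; lra.
Qed.

Section Limits.
Variables s u y0 : R.
Hypotheses (Hs : 0 <= s) (Hu : 0 < u) (Hy0 : 0 <= y0 <= 1).

Lemma g_lim_subcritical : u <= s -> y0 < 1 -> is_lim (fun r => g s u r y0) p_infty 0.
Proof.
  intros Hus Hlt. assert (Hk : 0 < s * (1 - y0)) by (apply Rmult_lt_0_compat; lra).
  apply (is_lim_of_decay_bound _ 0 y0 (s * (1 - y0)) Hk). intros r Hr.
  rewrite g_eq_div_den, Rminus_0_r by (auto; lra).
  pose proof (den_ge_1 s u y0 Hs Hy0 r Hr). pose proof (psi_ge_id s u r Hus Hr).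
  rewrite Rabs_pos_eq by (apply Rdiv_le_0_compat; lra).
  unfold Rdiv. apply Rmult_le_compat_l; [lra|]. apply Rinv_le_contravar; [nra|]. unfold den. nra.
Qed.

Lemma g_lim_supercritical :
  s < u -> is_lim (fun r => g s u r y0) p_infty (y0 * (u - s) / (u - s * y0)).
Proof.
  intros Hsu. assert (Hpos : 0 < u - s * y0) by nra.
  set (C := y0 * (s * (1 - y0)) / (u - s * y0)).
  assert (HC : 0 <= C)
    by (apply Rdiv_le_0_compat; [apply Rmult_le_pos; [|apply Rmult_le_pos]|]; lra).
  apply (is_lim_of_decay_bound _ _ C (u - s)); [lra|]. intros r Hr.
  rewrite g_eq_div_den by (auto; lra).
  pose proof (den_ge_1 s u y0 Hs Hy0 r Hr) as HD. pose proof (psi_closed_form s u r Hr) as Hpsi.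
  pose proof (exp_pos (- (u - s) * r)) as He.
  assert (E : y0 / den s u y0 r - y0 * (u - s) / (u - s * y0)
              = C * exp (- (u - s) * r) / den s u y0 r).
  { unfold C. replace (exp (- (u - s) * r)) with (1 - (u - s) * psi s u r) by lra.
    unfold den in *. field. lra. }
  rewrite E, Rabs_pos_eq by (apply Rdiv_le_0_compat; [apply Rmult_le_pos|]; lra).
  apply (Rle_trans _ (C * exp (- (u - s) * r))).
  - unfold Rdiv. rewrite <- (Rmult_1_r (C * _)) at 2. apply Rmult_le_compat_l; [nra|].
    rewrite <- Rinv_1. apply Rinv_le_contravar; lra.
  - unfold Rdiv. apply Rmult_le_compat_l; [exact HC|].
    replace (- (u - s) * r) with (- ((u - s) * r)) by ring. apply exp_neg_le_inv. nra.
Qed.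

End Limits.

Definition g_infty (s u y0 : R) : R :=
  if Rle_dec u s then (if Rlt_dec y0 1 then 0 else 1) else y0 * (u - s) / (u - s * y0).

Lemma is_lim_g (s u y0 : R) : 0 <= s -> 0 < u -> 0 <= y0 <= 1 ->
  is_lim (fun r => g s u r y0) p_infty (g_infty s u y0).
Proof.
  intros Hs Hu Hy0. unfold g_infty.
  destruct (Rle_dec u s) as [Hus|Hsu]; [destruct (Rlt_dec y0 1) as [Hlt|Hge]|].
  - now apply g_lim_subcritical.
  - replace y0 with 1 by lra. apply g_lim_at_1; lra.
  - apply g_lim_supercritical; auto; lra.
Qed.

Theorem proposition7p1 (s u : R) :
  0 <= s -> 0 < u ->
  (forall (y0 : R) (y : R -> R),
      0 <= y0 <= 1 -> y 0 = y0 ->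
      (forall t, 0 <= t -> is_derive y t (- s * y t * (1 - y t) + u * (1 - y t))) ->
      (forall r, 0 <= r ->
         g s u r y0 = y0 * exp (- s * RInt (fun xi => 1 - y xi) 0 r)) /\
      (forall r, 0 <= r -> y0 < 1 -> u - s * y0 <> 0 ->
         g s u r y0 = y0 * (u - s * y r) / (u - s * y0)) /\
      (forall r, 0 <= r -> (s * y0 = u \/ y0 = 1) ->
         g s u r y0 = y0 * exp (- r * s * (1 - y0)))) /\
  exists ginf : R -> R,
    (forall y0, 0 <= y0 <= 1 -> is_lim (fun r => g s u r y0) p_infty (ginf y0)) /\
    (s = 0 -> forall y0, 0 <= y0 <= 1 -> ginf y0 = y0) /\
    (u <= s -> (forall y0, 0 <= y0 < 1 -> ginf y0 = 0) /\ ginf 1 = 1) /\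
    (s < u -> forall y0, 0 <= y0 <= 1 -> ginf y0 = y0 * (u - s) / (u - s * y0)).
Proof.
  intros Hs Hu. split.
  - intros y0 y Hy0 Hyinit Hyderive. assert (Hu' : 0 <= u) by lra.
    split; [|split]; intros r Hr.
    + now apply g_eq_exp_RInt.
    + intros _. now apply g_eq_ratio.
    + now apply (g_eq_stationary s u y0 y).
  - exists (g_infty s u). unfold g_infty.
    split; [|split; [|split]].
    + intros y0 Hy0. now apply is_lim_g.
    + intros -> y0 Hy0. destruct (Rle_dec u 0); [lra|]. field. lra.
    + intros Hus. destruct (Rle_dec u s); [|lra]. split.
      * intros y0 Hy0. destruct (Rlt_dec y0 1); [reflexivity | lra].
      * destruct (Rlt_dec 1 1); [lra | reflexivity].
    + intros Hsu y0 Hy0. destruct (Rle_dec u s); [lra | reflexivity].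
Qed.
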